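(* Fix $e\in -\mathrm{int}(C)$ and let $A,B\in\mathcal P^0_{\mp C}(Y)$ be $\mp C$-compact sets. Then $(0,0)<_{\mathbb R^2_+}w_e(A,B)$ if and only if $A\prec^s B$.
   Context: $Y$ is a real topological linear space and $C\subset Y$ is a convex, closed, pointed cone with nonempty interior. $a<_{\mathbb R^2_+}b$ iff $b-a\in\mathrm{int}(\mathbb R^2_+)$. $\mathcal P^0_{\mp C}(Y)$ is the family of nonempty $A\subset Y$ with $A+C\neq Y$ and $A-C\neq Y$. $A$ is $C$-compact if every cover of $A$ by sets $U_\alpha+C$ with $U_\alpha$ open has a finite subcover; $\mp C$-compact means $C$-compact and $-C$-compact. $A\prec^s B$ iff $B\subset A+\mathrm{int}(C)$ and $A\subset B-\mathrm{int}(C)$. For $e\in-\mathrm{int}(C)$: $\phi_{e,A}(y)=\inf\{t\in\mathbb R: y\in te+A+C\}$; $G^\ell_e(A,B)=\sup_{b\in B}\phi_{e,A}(b)$; $G^u_e(B,A):=-G^\ell_e(-B,-A)$; $w_e(A,B)=\big(-G^\ell_e(A,B),\,G^u_e(B,A)\big)$. *)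

From Stdlib Require Import Reals List ClassicalEpsilon.
Open Scope R_scope.

Record TVS := {
  carrier :> Type;
  vadd : carrier -> carrier -> carrier;
  vopp : carrier -> carrier;
  vzero : carrier;
  vscal : R -> carrier -> carrier;
  vadd_assoc : forall x y z, vadd x (vadd y z) = vadd (vadd x y) z;
  vadd_comm : forall x y, vadd x y = vadd y x;
  vadd_0 : forall x, vadd x vzero = x;
  vadd_opp : forall x, vadd x (vopp x) = vzero;
  vscal_assoc : forall a b x, vscal a (vscal b x) = vscal (a * b) x;
  vscal_1 : forall x, vscal 1 x = x;
  vscal_distr_l : forall a x y, vscal a (vadd x y) = vadd (vscal a x) (vscal a y);
  vscal_distr_r : forall a b x, vscal (a + b) x = vadd (vscal a x) (vscal b x);
  is_open : (carrier -> Prop) -> Prop;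
  open_full : is_open (fun _ => True);
  open_inter : forall U V, is_open U -> is_open V -> is_open (fun x => U x /\ V x);
  open_union : forall (I : Type) (F : I -> carrier -> Prop),
      (forall i, is_open (F i)) -> is_open (fun x => exists i, F i x);
  vadd_cont : forall U x y, is_open U -> U (vadd x y) ->
      exists V W, is_open V /\ is_open W /\ V x /\ W y /\
                  (forall v w, V v -> W w -> U (vadd v w));
  vscal_cont : forall U t x, is_open U -> U (vscal t x) ->
      exists d V, 0 < d /\ is_open V /\ V x /\
                  (forall s v, Rabs (s - t) < d -> V v -> U (vscal s v))
}.

Arguments vadd {_}. Arguments vopp {_}. Arguments vzero {_}.
Arguments vscal {_}. Arguments is_open {_}.

Section Sets.
Context {Y : TVS}.

Definition int_set (S : Y -> Prop) : Y -> Prop :=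
  fun y => exists U, is_open U /\ U y /\ (forall z, U z -> S z).

Definition is_closed (S : Y -> Prop) : Prop := is_open (fun y => ~ S y).

Definition set_add (S T : Y -> Prop) : Y -> Prop :=
  fun y => exists s t, S s /\ T t /\ y = vadd s t.
Definition set_opp (S : Y -> Prop) : Y -> Prop := fun y => S (vopp y).
Definition set_sub (S T : Y -> Prop) : Y -> Prop := set_add S (set_opp T).
Definition sing_set (a : Y) : Y -> Prop := fun y => y = a.

Definition is_cone (C : Y -> Prop) : Prop :=
  forall t c, 0 <= t -> C c -> C (vscal t c).
Definition is_convex (C : Y -> Prop) : Prop :=
  forall x y t, 0 <= t <= 1 -> C x -> C y -> C (vadd (vscal t x) (vscal (1 - t) y)).
Definition is_pointed (C : Y -> Prop) : Prop :=
  forall c, C c -> C (vopp c) -> c = vzero.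
Definition standing_cone (C : Y -> Prop) : Prop :=
  is_cone C /\ is_convex C /\ is_closed C /\ is_pointed C /\ exists y, int_set C y.

Definition in_P0 (C A : Y -> Prop) : Prop :=
  (exists a, A a) /\ ~ (forall y, set_add A C y) /\ ~ (forall y, set_sub A C y).

Definition K_compact (K A : Y -> Prop) : Prop :=
  forall (I : Type) (U : I -> Y -> Prop),
    (forall i, is_open (U i)) ->
    (forall a, A a -> exists i, set_add (U i) K a) ->
    exists l : list I, forall a, A a -> exists i, In i l /\ set_add (U i) K a.

Definition mpC_compact (C A : Y -> Prop) : Prop :=
  K_compact C A /\ K_compact (set_opp C) A.

Definition set_less_s (C A B : Y -> Prop) : Prop :=
  (forall b, B b -> set_add A (int_set C) b) /\
  (forall a, A a -> set_sub B (int_set C) a).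

End Sets.

Inductive Rbar := Finite (r : R) | p_infty | m_infty.

Definition Rbar_le (x y : Rbar) : Prop :=
  match x, y with
  | m_infty, _ => True
  | _, p_infty => True
  | p_infty, _ => False
  | _, m_infty => False
  | Finite a, Finite b => a <= b
  end.
Definition Rbar_lt (x y : Rbar) : Prop :=
  match x, y with
  | m_infty, m_infty => False
  | m_infty, _ => True
  | p_infty, _ => False
  | Finite _, p_infty => True
  | Finite _, m_infty => False
  | Finite a, Finite b => a < b
  end.
Definition Rbar_opp (x : Rbar) : Rbar :=
  match x with Finite a => Finite (- a) | p_infty => m_infty | m_infty => p_infty end.

Definition is_Rbar_lub (S : Rbar -> Prop) (x : Rbar) : Prop :=
  (forall y, S y -> Rbar_le y x) /\ (forall z, (forall y, S y -> Rbar_le y z) -> Rbar_le x z).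
Definition is_Rbar_glb (S : Rbar -> Prop) (x : Rbar) : Prop :=
  (forall y, S y -> Rbar_le x y) /\ (forall z, (forall y, S y -> Rbar_le z y) -> Rbar_le z x).

(** supremum / infimum in the complete lattice of extended reals
    (sup of empty = -oo, inf of empty = +oo) *)
Definition Rbar_sup (S : Rbar -> Prop) : Rbar :=
  epsilon (inhabits m_infty) (is_Rbar_lub S).
Definition Rbar_inf (S : Rbar -> Prop) : Rbar :=
  epsilon (inhabits p_infty) (is_Rbar_glb S).

Section Scalarization.
Context {Y : TVS}.

Definition phi (C : Y -> Prop) (e : Y) (A : Y -> Prop) (y : Y) : Rbar :=
  Rbar_inf (fun z => exists t, z = Finite t /\
              set_add (set_add (sing_set (vscal t e)) A) C y).

Definition G_l (C : Y -> Prop) (e : Y) (A B : Y -> Prop) : Rbar :=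
  Rbar_sup (fun z => exists b, B b /\ z = phi C e A b).

Definition G_u (C : Y -> Prop) (e : Y) (B A : Y -> Prop) : Rbar :=
  Rbar_opp (G_l C e (set_opp B) (set_opp A)).

Definition w_e (C : Y -> Prop) (e : Y) (A B : Y -> Prop) : Rbar * Rbar :=
  (Rbar_opp (G_l C e A B), G_u C e B A).

End Scalarization.

(** a <_{R^2_+} b  iff  b - a in int(R^2_+), i.e. componentwise strict *)
Definition lt_R2plus (a b : Rbar * Rbar) : Prop :=
  Rbar_lt (fst a) (fst b) /\ Rbar_lt (snd a) (snd b).

(* For b in Y, phi_{e,A}(b) < 0 exactly when b lies in A + int C: a level t < 0
   contributes t e, which lies in int C because e is in -int C; conversely a
   point a + k with k in int C stays in A + int C after a small shift along e.
   Hence G^l_e(A,B) < 0 forces B to lie in A + int C.  For the converse,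
   C-compactness of B extracts finitely many such shifts s_1, ..., s_n from a
   cover of B, so G^l_e(A,B) <= -min s_i < 0.  The second component of w_e is
   the first one for the pair (-B, -A), and -C-compactness of A is
   C-compactness of -A. *)

From Stdlib Require Import Reals List ClassicalEpsilon.
From Stdlib Require Import Lra Classical FunctionalExtensionality PropExtensionality.
Open Scope R_scope.

Lemma Rbar_lub_exists (S : Rbar -> Prop) : exists x, is_Rbar_lub S x.
Proof.
  destruct (classic (S p_infty)) as [Sp|Sp].
  { exists p_infty; split; [intros [] _; simpl; auto|].
    intros z Hz; apply Hz; auto. }
  destruct (classic (exists r, S (Finite r))) as [[r0 Sr0]|noFinite].
  2:{ exists m_infty; split; [|intros; simpl; auto].
      intros [r| |] Sy; simpl; auto. apply noFinite; eauto. }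
  destruct (classic (bound (fun r => S (Finite r)))) as [Hb|Hb].
  - destruct (completeness _ Hb (ex_intro _ r0 Sr0)) as [m [m_ub m_least]].
    exists (Finite m); split.
    + intros [r| |] Sy; simpl; auto; apply m_ub; exact Sy.
    + intros [w| |] Hz; simpl; auto.
      * apply m_least; intros x Sx; apply (Hz _ Sx).
      * apply (Hz _ Sr0).
  - exists p_infty; split; [intros [] _; simpl; auto|].
    intros [w| |] Hz; simpl; auto.
    + apply Hb; exists w; intros x Sx; apply (Hz _ Sx).
    + apply (Hz _ Sr0).
Qed.

Lemma Rbar_opp_involutive (x : Rbar) : Rbar_opp (Rbar_opp x) = x.
Proof. destruct x; simpl; auto; f_equal; ring. Qed.

Lemma Rbar_opp_le (x y : Rbar) : Rbar_le (Rbar_opp x) (Rbar_opp y) <-> Rbar_le y x.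
Proof. destruct x, y; simpl; split; auto; lra. Qed.

Lemma Rbar_glb_exists (S : Rbar -> Prop) : exists x, is_Rbar_glb S x.
Proof.
  destruct (Rbar_lub_exists (fun y => S (Rbar_opp y))) as [x [x_ub x_least]].
  exists (Rbar_opp x); split.
  - intros y Sy. apply Rbar_opp_le. rewrite Rbar_opp_involutive.
    apply x_ub. rewrite Rbar_opp_involutive; auto.
  - intros z Hz. rewrite <- (Rbar_opp_involutive z). apply Rbar_opp_le.
    apply x_least. intros y Sy. rewrite <- (Rbar_opp_involutive y).
    apply Rbar_opp_le, Hz; auto.
Qed.

Lemma Rbar_sup_ub (S : Rbar -> Prop) x : S x -> Rbar_le x (Rbar_sup S).
Proof. apply (epsilon_spec _ _ (Rbar_lub_exists S)). Qed.

Lemma Rbar_sup_least (S : Rbar -> Prop) z :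
  (forall x, S x -> Rbar_le x z) -> Rbar_le (Rbar_sup S) z.
Proof. apply (epsilon_spec _ _ (Rbar_lub_exists S)). Qed.

Lemma Rbar_inf_lb (S : Rbar -> Prop) x : S x -> Rbar_le (Rbar_inf S) x.
Proof. apply (epsilon_spec _ _ (Rbar_glb_exists S)). Qed.

Lemma Rbar_inf_greatest (S : Rbar -> Prop) z :
  (forall x, S x -> Rbar_le z x) -> Rbar_le z (Rbar_inf S).
Proof. apply (epsilon_spec _ _ (Rbar_glb_exists S)). Qed.

Lemma Rbar_le_lt_trans (x y z : Rbar) : Rbar_le x y -> Rbar_lt y z -> Rbar_lt x z.
Proof. destruct x, y, z; simpl; auto; try lra; tauto. Qed.

Lemma Rbar_le_trans (x y z : Rbar) : Rbar_le x y -> Rbar_le y z -> Rbar_le x z.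
Proof. destruct x, y, z; simpl; auto; try lra; tauto. Qed.

Lemma Rbar_lt_not_le (x y : Rbar) : Rbar_lt x y -> ~ Rbar_le y x.
Proof. destruct x, y; simpl; auto; lra. Qed.

Lemma Rbar_opp_gt0 (x : Rbar) : Rbar_lt (Finite 0) (Rbar_opp x) <-> Rbar_lt x (Finite 0).
Proof. destruct x; simpl; split; auto; lra. Qed.

Lemma list_min_pos {I : Type} (l : list I) (f : I -> R) :
  (forall i, 0 < f i) -> exists m, 0 < m /\ forall i, In i l -> m <= f i.
Proof.
  intros f_pos; induction l as [|a l [m [m_pos m_le]]].
  - exists 1; split; [lra|intros i []].
  - exists (Rmin m (f a)); split; [apply Rmin_pos; auto|].
    intros i [<-|Hi]; [apply Rmin_r|]. eapply Rle_trans; [apply Rmin_l|auto].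
Qed.

Section Vectors.
Context {Y : TVS}.

Definition vsub (x y : Y) : Y := vadd x (vopp y).

Lemma vadd_0l (x : Y) : vadd vzero x = x.
Proof. rewrite vadd_comm; apply vadd_0. Qed.

Lemma vadd_oppl (x : Y) : vadd (vopp x) x = vzero.
Proof. rewrite vadd_comm; apply vadd_opp. Qed.

Lemma vadd_cancel (x y z : Y) : vadd x y = vadd x z -> y = z.
Proof.
  intro H.
  rewrite <- (vadd_0l y), <- (vadd_0l z), <- (vadd_oppl x), <- !vadd_assoc, H; auto.
Qed.

Lemma vopp_unique (x y : Y) : vadd x y = vzero -> y = vopp x.
Proof. intro H; apply (vadd_cancel x); rewrite H, vadd_opp; auto. Qed.

Lemma vopp_opp (x : Y) : vopp (vopp x) = x.
Proof. symmetry; apply vopp_unique, vadd_oppl. Qed.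

Lemma vopp_add (x y : Y) : vopp (vadd x y) = vadd (vopp x) (vopp y).
Proof.
  symmetry; apply vopp_unique.
  rewrite (vadd_comm _ x y), vadd_assoc, <- (vadd_assoc _ y x), vadd_opp, vadd_0, vadd_opp.
  reflexivity.
Qed.

Lemma vsubK (x y : Y) : vadd (vsub x y) y = x.
Proof. unfold vsub; rewrite <- vadd_assoc, vadd_oppl, vadd_0; auto. Qed.

Lemma vaddKl (x y : Y) : vsub (vadd x y) x = y.
Proof. unfold vsub; rewrite (vadd_comm _ x), <- vadd_assoc, vadd_opp, vadd_0; auto. Qed.

Lemma vsubDr (x y z : Y) : vsub x (vadd y z) = vsub (vsub x z) y.
Proof. unfold vsub; rewrite vopp_add, (vadd_comm _ (vopp y)), vadd_assoc; auto. Qed.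

Lemma vsubDl (x y z : Y) : vsub (vadd x y) z = vadd (vsub x z) y.
Proof. unfold vsub; rewrite <- !vadd_assoc, (vadd_comm _ y); auto. Qed.

Lemma vscal_0l (x : Y) : vscal 0 x = vzero.
Proof.
  apply (vadd_cancel (vscal 0 x)).
  rewrite vadd_0, <- vscal_distr_r, Rplus_0_l; auto.
Qed.

Lemma vscal_m1 (x : Y) : vscal (-1) x = vopp x.
Proof.
  apply vopp_unique. rewrite <- (vscal_1 _ x) at 1.
  rewrite <- vscal_distr_r, Rplus_opp_r; apply vscal_0l.
Qed.

Lemma vscal_vopp (t : R) (x : Y) : vscal t (vopp x) = vscal (- t) x.
Proof. rewrite <- vscal_m1, vscal_assoc; f_equal; ring. Qed.

Lemma vsub_scal_opp (t : R) (x y : Y) : vsub x (vscal (- t) y) = vadd x (vscal t y).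
Proof. unfold vsub; rewrite <- vscal_m1, vscal_assoc; do 2 f_equal; ring. Qed.

Lemma set_add_vsub_iff (S T : Y -> Prop) y :
  set_add S T y <-> exists s, S s /\ T (vsub y s).
Proof.
  split.
  - intros [s [t [Ss [Tt ->]]]]. exists s; rewrite vaddKl; auto.
  - intros [s [Ss Ty]]. exists s, (vsub y s); repeat split; auto.
    rewrite vadd_comm, vsubK; auto.
Qed.

Lemma set_opp_opp (S : Y -> Prop) : set_opp (set_opp S) = S.
Proof.
  apply functional_extensionality; intro y; unfold set_opp; rewrite vopp_opp; auto.
Qed.

Lemma set_add_oppl (S T : Y -> Prop) y :
  set_add (set_opp S) T y <-> set_add S (set_opp T) (vopp y).
Proof.
  unfold set_opp; split.
  - intros [s [t [Ss [Tt ->]]]]. exists (vopp s), (vopp t).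
    rewrite vopp_opp, vopp_add; auto.
  - intros [s [t [Ss [Tt Hy]]]]. exists (vopp s), (vopp t).
    rewrite vopp_opp, <- vopp_add, <- Hy, vopp_opp; auto.
Qed.

Lemma incl_set_add_oppl (A S T : Y -> Prop) :
  (forall y, set_opp A y -> set_add (set_opp S) T y) <->
  (forall a, A a -> set_sub S T a).
Proof.
  split; intros H a Ha.
  - rewrite <- (vopp_opp a). apply set_add_oppl, H.
    unfold set_opp; rewrite vopp_opp; auto.
  - apply set_add_oppl, H; auto.
Qed.

Lemma open_of_local (S : Y -> Prop) :
  (forall x, S x -> exists V, is_open V /\ V x /\ forall z, V z -> S z) -> is_open S.
Proof.
  intros H.
  set (I := {V : Y -> Prop | is_open V /\ forall z, V z -> S z}).
  assert (ES : (fun x => exists i : I, proj1_sig i x) = S).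
  { apply functional_extensionality; intro x; apply propositional_extensionality; split.
    - intros [[V [HV VS]] Vx]; simpl in Vx; auto.
    - intro Sx; destruct (H x Sx) as [V [HV [Vx VS]]].
      exists (exist _ V (conj HV VS)); exact Vx. }
  rewrite <- ES. apply open_union. intro i; exact (proj1 (proj2_sig i)).
Qed.

Lemma open_vadd_r (U : Y -> Prop) c : is_open U -> is_open (fun y => U (vadd y c)).
Proof.
  intros HU; apply open_of_local; intros x Ux.
  destruct (vadd_cont Y U x c HU Ux) as [V [W [HV [_ [Vx [Wc VW]]]]]].
  exists V; repeat split; auto.
Qed.

Lemma open_vscal (U : Y -> Prop) t : is_open U -> is_open (fun y => U (vscal t y)).
Proof.
  intros HU; apply open_of_local; intros x Ux.
  destruct (vscal_cont Y U t x HU Ux) as [d [V [d_pos [HV [Vx dV]]]]].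
  exists V; repeat split; auto. intros z Vz; apply dV; auto.
  rewrite Rminus_diag, Rabs_R0; auto.
Qed.

Lemma open_opp (U : Y -> Prop) : is_open U -> is_open (set_opp U).
Proof.
  intros HU. replace (set_opp U) with (fun y => U (vscal (-1) y)).
  - apply open_vscal; auto.
  - apply functional_extensionality; intro y; rewrite vscal_m1; auto.
Qed.

Lemma int_set_open (S : Y -> Prop) : is_open (int_set S).
Proof.
  apply open_of_local; intros x [U [HU [Ux US]]].
  exists U; repeat split; auto. intros z Uz; exists U; auto.
Qed.

Lemma int_set_sub (S : Y -> Prop) x : int_set S x -> S x.
Proof. intros [U [_ [Ux US]]]; auto. Qed.

Lemma open_shift_small (U : Y -> Prop) k e :
  is_open U -> U k -> exists s, 0 < s /\ U (vadd k (vscal s e)).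
Proof.
  intros HU Uk.
  assert (Uk0 : U (vadd k (vscal 0 e))) by (rewrite vscal_0l, vadd_0; auto).
  destruct (vadd_cont Y U k (vscal 0 e) HU Uk0) as [V [W [_ [HW [Vk [We VW]]]]]].
  destruct (vscal_cont Y W 0 e HW We) as [d [V' [d_pos [_ [V'e dW]]]]].
  exists (d / 2); split; [lra|]. apply VW; auto.
  apply dW; auto. rewrite Rminus_0_r, Rabs_right; lra.
Qed.

Lemma K_compact_opp (K A : Y -> Prop) :
  K_compact (set_opp K) A -> K_compact K (set_opp A).
Proof.
  intros HA I U HU Hcov.
  destruct (HA I (fun i => set_opp (U i))) as [l Hl].
  - intro i; apply open_opp; auto.
  - intros a Ha. destruct (Hcov (vopp a)) as [i Hi].
    { unfold set_opp; rewrite vopp_opp; auto. }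
    exists i. apply set_add_oppl. rewrite set_opp_opp; auto.
  - exists l. intros y Hy. destruct (Hl (vopp y) Hy) as [i [Hil Hi]].
    exists i; split; auto.
    apply (proj1 (set_add_oppl _ _ _)) in Hi. rewrite set_opp_opp, vopp_opp in Hi; auto.
Qed.

Section Cone.
Variable C : Y -> Prop.
Hypothesis HC : standing_cone C.

Lemma cone_add x y : C x -> C y -> C (vadd x y).
Proof.
  destruct HC as [Hcone [Hconv _]]. intros Cx Cy.
  assert (Cmid := Hconv x y (/2) ltac:(lra) Cx Cy).
  replace (1 - /2) with (/2) in Cmid by field.
  assert (C2 := Hcone 2 _ ltac:(lra) Cmid).
  rewrite vscal_distr_l, !vscal_assoc, Rinv_r, !vscal_1 in C2; auto; lra.
Qed.

Lemma cone_0 : C vzero.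
Proof.
  destruct HC as [Hcone [_ [_ [_ [y [U [_ [Uy US]]]]]]]].
  rewrite <- (vscal_0l y). apply Hcone; auto; lra.
Qed.

Lemma cone_add_int c k : C c -> int_set C k -> int_set C (vadd c k).
Proof.
  intros Cc [U [HU [Uk US]]].
  exists (fun y => U (vsub y c)); repeat split.
  - apply open_vadd_r; auto.
  - rewrite vaddKl; auto.
  - intros z Uz. rewrite <- (vsubK z c), vadd_comm. apply cone_add; auto.
Qed.

Lemma int_set_scal s k : 0 < s -> int_set C k -> int_set C (vscal s k).
Proof.
  destruct HC as [Hcone _].
  intros s_pos [U [HU [Uk US]]].
  exists (fun y => U (vscal (/ s) y)); repeat split.
  - apply open_vscal; auto.
  - rewrite vscal_assoc, Rinv_l, vscal_1; auto; lra.
  - intros z Uz. replace z with (vscal s (vscal (/ s) z)).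
    + apply Hcone; [lra|auto].
    + rewrite vscal_assoc, Rinv_r, vscal_1; auto; lra.
Qed.

Variable e : Y.
Hypothesis He : int_set C (vopp e).

Lemma phi_level_iff A t y :
  set_add (set_add (sing_set (vscal t e)) A) C y <->
  exists a, A a /\ C (vsub (vsub y a) (vscal t e)).
Proof.
  rewrite set_add_vsub_iff. split.
  - intros [s [[u [a [-> [Aa ->]]]] Cy]]. exists a; rewrite <- vsubDr; auto.
  - intros [a [Aa Cy]]. exists (vadd (vscal t e) a).
    rewrite vsubDr; split; auto. exists (vscal t e), a; repeat split; auto.
Qed.

Lemma phi_le A t y :
  set_add (set_add (sing_set (vscal t e)) A) C y -> Rbar_le (phi C e A y) (Finite t).
Proof. intro Hy; apply Rbar_inf_lb; eauto. Qed.

Lemma phi_lt0_int A y :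
  Rbar_lt (phi C e A y) (Finite 0) -> set_add A (int_set C) y.
Proof.
  intro phi_neg. apply NNPP; intro not_int.
  apply (Rbar_lt_not_le _ _ phi_neg), Rbar_inf_greatest.
  intros z [t [-> Ht]]. simpl. apply Rnot_lt_le; intro t_neg.
  apply not_int, set_add_vsub_iff.
  apply phi_level_iff in Ht as [a [Aa Cya]]. exists a; split; auto.
  rewrite <- (vsubK (vsub y a) (vscal t e)). apply cone_add_int; auto.
  replace (vscal t e) with (vscal (- t) (vopp e))
    by (rewrite vscal_vopp, Ropp_involutive; auto).
  apply int_set_scal; auto; lra.
Qed.

Lemma G_l_lt0_incl A B :
  Rbar_lt (G_l C e A B) (Finite 0) -> forall b, B b -> set_add A (int_set C) b.
Proof.
  intros G_neg b Bb. apply phi_lt0_int.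
  apply Rbar_le_lt_trans with (G_l C e A B); auto.
  apply Rbar_sup_ub; exists b; auto.
Qed.

(* Each point a + k of A + int C yields the open set U_(a,s) := a - s e + int C,
   whose translate U_(a,s) + C lies in the level set of phi at -s. *)
Lemma incl_G_l_lt0 A B :
  K_compact C B -> (forall b, B b -> set_add A (int_set C) b) ->
  Rbar_lt (G_l C e A B) (Finite 0).
Proof.
  intros HB B_int.
  set (I := {p : Y * R | A (fst p) /\ 0 < snd p}).
  set (U := fun (i : I) y =>
    int_set C (vsub (vsub y (fst (proj1_sig i))) (vscal (- snd (proj1_sig i)) e))).
  destruct (HB I U) as [l Hl].
  { intro i. apply (open_vadd_r (fun z => int_set C (vsub z _))).
    apply (open_vadd_r (int_set C)), int_set_open. }
  { intros b Bb. destruct (proj1 (set_add_vsub_iff _ _ _) (B_int b Bb)) as [a [Aa Hk]].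
    destruct (open_shift_small _ _ e (int_set_open C) Hk) as [s [s_pos Hks]].
    exists (exist _ (a, s) (conj Aa s_pos)), b, vzero; repeat split.
    - unfold U; simpl. rewrite vsub_scal_opp; auto.
    - apply cone_0.
    - rewrite vadd_0; auto. }
  destruct (list_min_pos l (fun i => snd (proj1_sig i))) as [m [m_pos m_le]].
  { intro i; exact (proj2 (proj2_sig i)). }
  apply Rbar_le_lt_trans with (Finite (- m)); [|simpl; lra].
  apply Rbar_sup_least. intros z [y [By ->]].
  destruct (Hl y By) as [i [Hil [u [c [Uu [Cc ->]]]]]].
  assert (m_le_i := m_le i Hil).
  destruct i as [[a s] [Aa s_pos]]; unfold U in Uu; simpl in Uu, m_le_i.
  apply Rbar_le_trans with (Finite (- s)); [|simpl; lra].
  apply phi_le, phi_level_iff. exists a; split; auto.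
  rewrite !vsubDl. apply cone_add; auto. apply int_set_sub; auto.
Qed.

Lemma G_l_lt0_iff A B : K_compact C B ->
  Rbar_lt (G_l C e A B) (Finite 0) <-> forall b, B b -> set_add A (int_set C) b.
Proof. split; [apply G_l_lt0_incl|apply incl_G_l_lt0; auto]. Qed.

End Cone.
End Vectors.

Theorem theorem4 (Y : TVS) (C : Y -> Prop) (e : Y) (A B : Y -> Prop) :
  standing_cone C ->
  int_set C (vopp e) ->
  in_P0 C A -> in_P0 C B ->
  mpC_compact C A -> mpC_compact C B ->
  (lt_R2plus (Finite 0, Finite 0) (w_e C e A B) <-> set_less_s C A B).
Proof.
  intros HC He _ _ [_ HA] [HB _].
  unfold lt_R2plus, w_e, G_u, set_less_s; cbn [fst snd].
  rewrite !Rbar_opp_gt0, (G_l_lt0_iff C HC e He A B HB),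
    (G_l_lt0_iff C HC e He _ _ (K_compact_opp _ _ HA)), incl_set_add_oppl.
  reflexivity.
Qed.
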